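(* Let $n\ge27$, $\mathcal{X},\mathcal{Y}$ finite with $|\mathcal{X}|,|\mathcal{Y}|\ge2$, $\mathbf{X}$ a random vector on $\mathcal{X}^n$ and $\mathbf{Y}|\mathbf{X}\sim p^n_{Y|X}$. Let $U$ be a discrete random variable with $U,\mathbf{X},\mathbf{Y}$ a Markov chain in that order, let $u$ be in the support of $U$, and let $\mathcal{A}_u$ be the support of $\mathbf{X}$ given $U=u$. If $\log_2 g^n_{Y|X}(\mathcal{A}_u,1-\beta)\le c$ for some $c>0$ and $\beta\in(0,1)$, then $$\Pr\left(h_{\mathbf{Y}|U}(\mathbf{Y}|U)\le\mu+c\,\middle|\,U=u\right)\ge 1-2^{-\mu}-\beta$$ for each $\mu>0$.
   Context: $h_{\mathbf{Y}|U}(\mathbf{y}|u)=-\log_2 p_{\mathbf{Y}|U}(\mathbf{y}|u)$. For $\eta\in(0,1)$ and $\mathcal{A}\subseteq\mathcal{X}^n$, a set $\mathcal{B}\subseteq\mathcal{Y}^n$ is an $\eta$-image of $\mathcal{A}$ by $p_{Y|X}$ if $p^n_{Y|X}(\mathcal{B}|\mathbf{x})\ge\eta$ for all $\mathbf{x}\in\mathcal{A}$; $g^n_{Y|X}(\mathcal{A},\eta)$ is the minimum cardinality of such a set. *)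

From HB Require Import structures.
From mathcomp Require Import all_boot all_order all_algebra.
From mathcomp Require Import all_classical all_reals all_analysis.
Set Implicit Arguments. Unset Strict Implicit. Unset Printing Implicit Defensive.
Import Order.TTheory GRing.Theory Num.Theory.
Local Open Scope ring_scope.

Section Defs.
Variable R : realType.

Definition log2 (x : R) : R := ln x / ln 2.

(* a discrete memoryless channel p_{Y|X} : W x y = p_{Y|X}(y|x) *)
Definition is_channel (X Y : finType) (W : X -> Y -> R) :=
  (forall x y, 0 <= W x y) /\ (forall x, \sum_(y : Y) W x y = 1).

Definition chan_n (X Y : finType) (W : X -> Y -> R) (n : nat)
  (x : {ffun 'I_n -> X}) (y : {ffun 'I_n -> Y}) : R :=
  \prod_(i < n) W (x i) (y i).

Definition chan_n_set (X Y : finType) (W : X -> Y -> R) (n : nat)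
  (B : {set {ffun 'I_n -> Y}}) (x : {ffun 'I_n -> X}) : R :=
  \sum_(y in B) chan_n W x y.

Definition is_eta_image (X Y : finType) (W : X -> Y -> R) (n : nat)
  (A : {set {ffun 'I_n -> X}}) (eta : R) (B : {set {ffun 'I_n -> Y}}) : bool :=
  [forall x in A, eta <= chan_n_set W B x].

(* g^n_{Y|X}(A, eta): minimum cardinality of an eta-image of A.
   (The full set is an eta-image whenever W is a channel and eta <= 1, so the
   default value #|Y^n| of the min does not matter in that case.) *)
Definition g_img (X Y : finType) (W : X -> Y -> R) (n : nat)
  (A : {set {ffun 'I_n -> X}}) (eta : R) : nat :=
  \big[minn/#|{: {ffun 'I_n -> Y}}|]_(B : {set {ffun 'I_n -> Y}} | is_eta_image W A eta B) #|B|.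

(* Joint pmf P u x y = Pr(U = u, X = x, Y = y) *)
Definition PU (U : Type) (X Y : finType) (n : nat)
  (P : U -> {ffun 'I_n -> X} -> {ffun 'I_n -> Y} -> R) (u : U) : R :=
  \sum_(x : {ffun 'I_n -> X}) \sum_(y : {ffun 'I_n -> Y}) P u x y.

Definition PUX (U : Type) (X Y : finType) (n : nat)
  (P : U -> {ffun 'I_n -> X} -> {ffun 'I_n -> Y} -> R) (u : U) x : R :=
  \sum_(y : {ffun 'I_n -> Y}) P u x y.

Definition PYgU (U : Type) (X Y : finType) (n : nat)
  (P : U -> {ffun 'I_n -> X} -> {ffun 'I_n -> Y} -> R) (u : U) y : R :=
  (\sum_(x : {ffun 'I_n -> X}) P u x y) / PU P u.

Definition hYgU (U : Type) (X Y : finType) (n : nat)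
  (P : U -> {ffun 'I_n -> X} -> {ffun 'I_n -> Y} -> R) (u : U) y : R :=
  - log2 (PYgU P u y).

Definition supp_XgU (U : Type) (X Y : finType) (n : nat)
  (P : U -> {ffun 'I_n -> X} -> {ffun 'I_n -> Y} -> R) (u : U)
  : {set {ffun 'I_n -> X}} :=
  [set x | 0 < PUX P u x / PU P u].

End Defs.

From HB Require Import structures.
From mathcomp Require Import all_boot all_order all_algebra.
From mathcomp Require Import all_classical all_reals all_analysis.
From mathcomp Require Import lra.
Set Implicit Arguments.
Unset Strict Implicit.
Unset Printing Implicit Defensive.
Import Order.TTheory GRing.Theory Num.Theory.
Local Open Scope ring_scope.

(* Let B be a (1 - beta)-image of A_u of minimal size, so |B| <= 2^c.  Given
   U = u, Y lands in B with probability at least 1 - beta, since its law is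
   the mixture over x in A_u of the laws p^n(.|x).  An outcome y with
   h(y|u) > mu + c has probability at most 2^-(mu+c), so the outcomes in B of
   this kind carry at most |B| 2^-(mu+c) <= 2^-mu; all the others lie outside
   B and carry at most beta. *)

Section FiniteDistributions.
Variables (R : realDomainType) (T : finType).

Lemma convex_comb_ge (w f : T -> R) (eta : R) :
  (forall x, 0 <= w x) -> \sum_x w x = 1 ->
  (forall x, 0 < w x -> eta <= f x) ->
  eta <= \sum_x w x * f x.
Proof.
move=> w_ge0 w_sum1 eta_le.
have -> : eta = \sum_x w x * eta by rewrite -mulr_suml w_sum1 mul1r.
apply: ler_sum => x _.
have := w_ge0 x; rewrite le_eqVlt => /predU1P[<-|wx_gt0].
  by rewrite !mul0r.
by rewrite ler_wpM2l ?w_ge0 ?eta_le.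
Qed.

Variable q : T -> R.
Hypothesis q_ge0 : forall y, 0 <= q y.

Lemma sum_unlikely_le (S : pred T) (B : {set T}) (a : R) :
  0 <= a -> (forall y, ~~ S y -> q y <= a) ->
  \sum_(y | ~~ S y) q y <= \sum_(y | y \notin B) q y + #|B|%:R * a.
Proof.
move=> a_ge0 q_le_a.
rewrite mulr_natl -sumr_const big_mkcond [X in _ <= X + _]big_mkcond.
rewrite [X in _ <= _ + X]big_mkcond -big_split /=; apply: ler_sum => y _.
case: (boolP (S y)) => Sy; case: (boolP (y \in B)) => By /=;
  rewrite ?add0r ?addr0 ?q_ge0 //.
exact: q_le_a.
Qed.

Lemma sum_likely_ge (S : pred T) (B : {set T}) (a : R) :
  \sum_y q y = 1 -> 0 <= a -> (forall y, ~~ S y -> q y <= a) ->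
  \sum_(y in B) q y - #|B|%:R * a <= \sum_(y | S y) q y.
Proof.
move=> q_sum1 a_ge0 q_le_a.
have := sum_unlikely_le B a_ge0 q_le_a.
have := q_sum1; rewrite (bigID S) /=.
have := q_sum1; rewrite (bigID (mem B)) /=.
lra.
Qed.

End FiniteDistributions.

Lemma log2_le_powR (R : realType) (x c : R) :
  0 <= x -> log2 x <= c -> x <= 2 `^ c.
Proof.
rewrite le_eqVlt => /predU1P[<- _|x_gt0]; first exact: powR_ge0.
rewrite /log2 ler_pdivrMr ?ln_gt0 ?ltr1n // -ln_powR.
by rewrite ler_ln ?posrE ?powR_gt0.
Qed.

Section Images.
Variables (R : realType) (X Y : finType) (W : X -> Y -> R) (n : nat).
Variables (A : {set {ffun 'I_n -> X}}) (eta : R).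

Lemma chan_n_setT x :
  is_channel W -> chan_n_set W [set: {ffun 'I_n -> Y}]%SET x = 1.
Proof.
case=> _ W_sum1; rewrite /chan_n_set /chan_n.
rewrite (eq_bigl (fun=> true)) => [|y]; last by rewrite inE.
by rewrite -(bigA_distr_bigA (fun i y => W (x i) y)) big1.
Qed.

Lemma setT_eta_image :
  is_channel W -> eta <= 1 -> is_eta_image W A eta [set: {ffun 'I_n -> Y}]%SET.
Proof.
by move=> W_chan eta_le1; apply/forall_inP => x _; rewrite chan_n_setT.
Qed.

Lemma g_img_attained :
  is_eta_image W A eta [set: {ffun 'I_n -> Y}]%SET ->
  exists2 B, is_eta_image W A eta B & #|B| = g_img W A eta.
Proof.
move=> etaT; rewrite /g_img.
apply: (big_ind (fun v => exists2 B, is_eta_image W A eta B & #|B| = v)).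
- by exists [set: {ffun 'I_n -> Y}]%SET; rewrite ?cardsT.
- move=> _ _ [B1 etaB1 <-] [B2 etaB2 <-].
  have [le12|lt21] := leqP #|B1| #|B2|.
  + by exists B1; rewrite ?(minn_idPl le12).
  + by exists B2; rewrite ?(minn_idPr (ltnW lt21)).
- by move=> B etaB; exists B.
Qed.

End Images.

Section Conditional.
Variables (R : realType) (U : Type) (X Y : finType) (n : nat).
Variable P : U -> {ffun 'I_n -> X} -> {ffun 'I_n -> Y} -> R.
Hypothesis P_ge0 : forall u x y, 0 <= P u x y.
Variable u : U.
Hypothesis PU_gt0 : 0 < PU P u.

Definition PXgU x : R := PUX P u x / PU P u.

Lemma PXgU_ge0 x : 0 <= PXgU x.
Proof. by apply: divr_ge0; [exact: sumr_ge0 | exact: ltW]. Qed.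

Lemma sum_PXgU : \sum_x PXgU x = 1.
Proof. by rewrite /PXgU -mulr_suml divff ?gt_eqF. Qed.

Lemma PYgU_ge0 y : 0 <= PYgU P u y.
Proof. by apply: divr_ge0; [exact: sumr_ge0 | exact: ltW]. Qed.

Lemma sum_PYgU : \sum_y PYgU P u y = 1.
Proof. by rewrite -mulr_suml exchange_big divff ?gt_eqF. Qed.

Variable W : X -> Y -> R.
Hypothesis P_markov : forall x y, P u x y = PUX P u x * chan_n W x y.

Lemma sum_PYgU_set (B : {set {ffun 'I_n -> Y}}) :
  \sum_(y in B) PYgU P u y = \sum_x PXgU x * chan_n_set W B x.
Proof.
rewrite -mulr_suml exchange_big mulr_suml; apply: eq_bigr => x _.
rewrite /chan_n_set big_distrr mulr_suml; apply: eq_bigr => y _.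
by rewrite P_markov mulrAC.
Qed.

Lemma eta_image_PYgU (eta : R) (B : {set {ffun 'I_n -> Y}}) :
  is_eta_image W (supp_XgU P u) eta B -> eta <= \sum_(y in B) PYgU P u y.
Proof.
move=> /forall_inP etaB; rewrite sum_PYgU_set.
apply: convex_comb_ge => [x||x x_supp]; [exact: PXgU_ge0 | exact: sum_PXgU |].
by apply: etaB; rewrite inE.
Qed.

End Conditional.

Theorem lemma25 (R : realType) (n : nat) (X Y : finType) (U : choiceType)
  (W : X -> Y -> R)
  (P : U -> {ffun 'I_n -> X} -> {ffun 'I_n -> Y} -> R)
  (u : U) (c beta : R) :
  (27 <= n)%N -> (2 <= #|X|)%N -> (2 <= #|Y|)%N ->
  is_channel W ->
  (* P is a joint pmf of (U, X, Y) with U discrete *)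
  (forall u' x y, 0 <= P u' x y) ->
  (\esum_(u' in [set: U]) (PU P u')%:E = 1)%E ->
  (* Y | X ~ p^n_{Y|X} and U - X - Y is a Markov chain:
     Pr(U=u',X=x,Y=y) = Pr(U=u',X=x) p^n_{Y|X}(y|x) *)
  (forall u' x y, P u' x y = PUX P u' x * chan_n W x y) ->
  0 < PU P u ->
  0 < c -> 0 < beta < 1 ->
  log2 (g_img W (supp_XgU P u) (1 - beta))%:R <= c ->
  forall mu : R, 0 < mu ->
    1 - powR 2 (- mu) - beta <=
    \sum_(y : {ffun 'I_n -> Y} | hYgU P u y <= mu + c) PYgU P u y.
Proof.
move=> _ _ _ W_chan P_ge0 _ P_markov PU_gt0 _ /andP[beta_gt0 _] log_g_le mu _.
have etaT : is_eta_image W (supp_XgU P u) (1 - beta) [set: _]%SET.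
  by apply: setT_eta_image => //; lra.
have [B etaB cardB] := g_img_attained etaT.
have PB := eta_image_PYgU P_ge0 PU_gt0 (P_markov u) etaB.
have cardB_le : #|B|%:R <= 2 `^ c.
  by apply: log2_le_powR; rewrite ?ler0n ?cardB.
set a := 2 `^ (- (mu + c)).
have unlikely y : ~~ (hYgU P u y <= mu + c) -> PYgU P u y <= a.
  rewrite -ltNge /hYgU ltrNr => log_lt.
  exact: log2_le_powR (PYgU_ge0 P_ge0 PU_gt0 y) (ltW log_lt).
have mass_B : #|B|%:R * a <= 2 `^ (- mu).
  have -> : - mu = c + - (mu + c) by lra.
  rewrite powRD; last by rewrite pnatr_eq0 implybT.
  by rewrite ler_wpM2r ?powR_ge0.
have := sum_likely_ge (PYgU_ge0 P_ge0 PU_gt0) B (a := a)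
  (sum_PYgU PU_gt0) (powR_ge0 2 _) unlikely.
clearbody a; lra.
Qed.
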